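(* Let $n\ge 3$ and let $C\in\mathbb{R}^{n\times n}$ be nonnegative, doubly stochastic, irreducible, with zero diagonal entries. Let $x(s)$ evolve by the Modified DeGroot-Friedkin model $x(s+1)=C^\top x(s)+X(s)x(s)-C^\top X(s)x(s)$, $X(s)=\mathrm{diag}(x(s))$, with $x(0)\in\Delta\setminus\{e_1,\dots,e_n\}$. Let $x(s)_{\min}=\min_i x_i(s)$ and $x(s)_{\max}=\max_i x_i(s)$. Then for all $s\ge 0$ and all $i$, $x(s)_{\min}\le x_i(s+1)\le x(s)_{\max}$; in particular $x(s+1)_{\min}\ge x(s)_{\min}$ and $x(s+1)_{\max}\le x(s)_{\max}$.
   Context: $\Delta=\{x\in\mathbb{R}^n: x\ge 0,\ \sum_i x_i=1\}$; $e_i$ is the $i$th standard basis vector. *)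

(* the statement is purely algebraic/order-theoretic, so we
   state it over an arbitrary real field R (R = the reals is an instance). *)
From HB Require Import structures.
From mathcomp Require Import all_boot all_order all_algebra.
Set Implicit Arguments. Unset Strict Implicit. Unset Printing Implicit Defensive.
Import Order.TTheory GRing.Theory Num.Theory.
Local Open Scope ring_scope.

Definition nonneg_mx (R : realFieldType) n (C : 'M[R]_n) : Prop :=
  forall i j, 0 <= C i j.

Definition doubly_stochastic (R : realFieldType) n (C : 'M[R]_n) : Prop :=
  nonneg_mx C /\ (forall i, \sum_j C i j = 1) /\ (forall j, \sum_i C i j = 1).

Definition irreducible_mx (R : realFieldType) n (C : 'M[R]_n) : Prop :=
  forall i j : 'I_n, connect (fun a b => C a b != 0) i j.

Definition zero_diag (R : realFieldType) n (C : 'M[R]_n) : Prop :=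
  forall i, C i i = 0.

Definition in_simplex (R : realFieldType) n (x : 'cV[R]_n) : Prop :=
  (forall i, 0 <= x i 0) /\ \sum_i x i 0 = 1.

Definition basis_vec {R : realFieldType} n (i : 'I_n) : 'cV[R]_n := delta_mx i 0.

Definition mdf_step (R : realFieldType) n (C : 'M[R]_n) (x : 'cV[R]_n) : 'cV[R]_n :=
  let X := diag_mx (x^T) in
  C^T *m x + X *m x - C^T *m (X *m x).

(* min / max entry of a vector (for n > 0 these are the true min / max) *)
Definition vmin (R : realFieldType) n (x : 'cV[R]_n) : R :=
  let l := [seq x i 0 | i <- enum 'I_n] in \big[Num.min/head 0 l]_(a <- l) a.
Definition vmax (R : realFieldType) n (x : 'cV[R]_n) : R :=
  let l := [seq x i 0 | i <- enum 'I_n] in \big[Num.max/head 0 l]_(a <- l) a.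

From HB Require Import structures.
From mathcomp Require Import all_boot all_order all_algebra.
From mathcomp Require Import lra.
Set Implicit Arguments. Unset Strict Implicit. Unset Printing Implicit Defensive.
Import Order.TTheory GRing.Theory Num.Theory.
Local Open Scope ring_scope.

(* The i-th new entry is x_i^2 + sum_j C_ji f(x_j) with f(t) = t(1 - t), and the
   column sums of C are 1, so it lies between x_i^2 + f(min x) and
   x_i^2 + f(max x).  On the simplex two distinct entries sum to at most 1,
   and f is nondecreasing along pairs a <= b with a + b <= 1; hence
   f(min x) <= f(x_j) <= f(max x) for every j.  Finally
   min^2 <= x_i^2 <= max^2 turns these into min x <= x_i(s+1) <= max x. *)

Lemma bigmin_head_mem d (T : orderType d) (s : seq T) x0 :
  s != [::] -> \big[Order.min/head x0 s]_(a <- s) a \in s.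
Proof.
case: s => [//|a s] _ /=; rewrite big_seq.
by elim/big_ind: _ => [|y z|y] //; [exact: mem_head | rewrite /Order.min; case: ifP].
Qed.

Lemma bigmax_head_mem d (T : orderType d) (s : seq T) x0 :
  s != [::] -> \big[Order.max/head x0 s]_(a <- s) a \in s.
Proof.
case: s => [//|a s] _ /=; rewrite big_seq.
by elim/big_ind: _ => [|y z|y] //; [exact: mem_head | rewrite /Order.max; case: ifP].
Qed.

Section ConvexCombination.
Variables (R : realFieldType) (I : finType) (w f : I -> R) (c : R).
Hypotheses (w_ge0 : forall j, 0 <= w j) (w_sum1 : \sum_j w j = 1).

Lemma le_convex_comb : (forall j, c <= f j) -> c <= \sum_j w j * f j.
Proof.
move=> c_le; rewrite -[c]mul1r -w_sum1 mulr_suml.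
by apply: ler_sum => j _; apply: ler_wpM2l.
Qed.

Lemma convex_comb_le : (forall j, f j <= c) -> \sum_j w j * f j <= c.
Proof.
move=> le_c; rewrite -[c]mul1r -w_sum1 mulr_suml.
by apply: ler_sum => j _; apply: ler_wpM2l.
Qed.

End ConvexCombination.

Lemma le_mul_compl (R : realFieldType) (a b : R) :
  a <= b -> a + b <= 1 -> a * (1 - a) <= b * (1 - b).
Proof. by move=> ab ab1; nra. Qed.

Section Extrema.
Variables (R : realFieldType) (n : nat).
Implicit Types x : 'cV[R]_n.

Lemma vmin_le x i : vmin x <= x i 0.
Proof. by rewrite /vmin big_map ge_bigmin_seq ?mem_enum. Qed.

Lemma vmax_ge x i : x i 0 <= vmax x.
Proof.
by rewrite /vmax big_map (@le_bigmax_seq _ _ _ _ _ i xpredT (fun j => x j 0)) ?mem_enum.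
Qed.

Lemma entries_neq0 x : (0 < n)%N -> [seq x i 0 | i <- enum 'I_n] != [::].
Proof. by rewrite -size_eq0 size_map size_enum_ord -lt0n. Qed.

Lemma vmin_attained x : (0 < n)%N -> exists i, vmin x = x i 0.
Proof.
by move=> /(entries_neq0 x)/(bigmin_head_mem 0)/mapP[i _ e]; exists i.
Qed.

Lemma vmax_attained x : (0 < n)%N -> exists i, vmax x = x i 0.
Proof.
by move=> /(entries_neq0 x)/(bigmax_head_mem 0)/mapP[i _ e]; exists i.
Qed.

Lemma simplex_ge0 x : in_simplex x -> forall i, 0 <= x i 0.
Proof. by case. Qed.

Lemma vmin_ge0 x : in_simplex x -> 0 <= vmin x.
Proof.
case=> x_ge0 _; rewrite /vmin big_map; apply: le_bigmin => [|i _]; last exact: x_ge0.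
by case: (enum _) => //= i _; exact: x_ge0.
Qed.

Lemma simplex_add_le1 x j k : in_simplex x -> j != k -> x j 0 + x k 0 <= 1.
Proof.
case=> x_ge0 <- jk; rewrite (bigD1 j) //= (bigD1 k) 1?eq_sym //= addrA lerDl.
by apply: sumr_ge0 => l _.
Qed.

Lemma compl_vmin_le x : in_simplex x ->
  forall j, vmin x * (1 - vmin x) <= x j 0 * (1 - x j 0).
Proof.
move=> xS j; have [k xk] := vmin_attained x (leq_ltn_trans (leq0n j) (ltn_ord j)).
have [->|jk] := eqVneq j k; first by rewrite xk.
by apply: le_mul_compl; rewrite ?vmin_le // xk addrC simplex_add_le1.
Qed.

Lemma compl_le_vmax x : in_simplex x ->
  forall j, x j 0 * (1 - x j 0) <= vmax x * (1 - vmax x).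
Proof.
move=> xS j; have [k xk] := vmax_attained x (leq_ltn_trans (leq0n j) (ltn_ord j)).
have [->|jk] := eqVneq j k; first by rewrite xk.
by apply: le_mul_compl; rewrite ?vmax_ge // xk simplex_add_le1.
Qed.

End Extrema.

Section ModifiedDeGrootFriedkin.
Variables (R : realFieldType) (n : nat) (C : 'M[R]_n).
Hypothesis C_ds : doubly_stochastic C.
Implicit Types x : 'cV[R]_n.

Lemma mdf_step_entry x i :
  mdf_step C x i 0 = x i 0 ^+ 2 + \sum_j C j i * (x j 0 * (1 - x j 0)).
Proof.
rewrite /mdf_step mul_diag_mx !mxE addrAC addrC expr2; congr (_ + _).
by rewrite -sumrB; apply: eq_bigr => j _; rewrite !mxE mulrBr mulr1 mulrBr.
Qed.

Lemma mdf_step_bounds x i : in_simplex x ->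
  vmin x <= mdf_step C x i 0 <= vmax x.
Proof.
case: C_ds => C_ge0 [_ C_col] xS; have x_ge0 := simplex_ge0 xS.
have sum_ge := le_convex_comb (C_ge0^~ i) (C_col i) (compl_vmin_le xS).
have sum_le := convex_comb_le (C_ge0^~ i) (C_col i) (compl_le_vmax xS).
have := vmin_ge0 xS; have := vmin_le x i; have := vmax_ge x i; have := x_ge0 i.
by rewrite mdf_step_entry; nra.
Qed.

Lemma mdf_step_simplex x : in_simplex x -> in_simplex (mdf_step C x).
Proof.
move=> xS; split=> [i|].
  exact: le_trans (vmin_ge0 xS) (andP (mdf_step_bounds i xS)).1.
case: C_ds => _ [C_row _]; under eq_bigr do rewrite mdf_step_entry.
rewrite big_split /= exchange_big /=.
under [X in _ + X]eq_bigr do rewrite -mulr_suml C_row mul1r.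
rewrite -big_split -[RHS](proj2 xS); apply: eq_bigr => j _ /=.
by rewrite expr2 mulrBr mulr1 addrC subrK.
Qed.

End ModifiedDeGrootFriedkin.

Theorem lemma4 (R : realFieldType) (n : nat) (C : 'M[R]_n) (x : nat -> 'cV[R]_n) :
  (3 <= n)%N ->
  doubly_stochastic C -> irreducible_mx C -> zero_diag C ->
  (forall s, x s.+1 = mdf_step C (x s)) ->
  in_simplex (x 0%N) -> (forall i : 'I_n, x 0%N <> basis_vec (R:=R) i) ->
  forall s : nat,
    (forall i : 'I_n, vmin (x s) <= x s.+1 i 0 <= vmax (x s)) /\
    vmin (x s) <= vmin (x s.+1) /\ vmax (x s.+1) <= vmax (x s).
Proof.
move=> n3 C_ds _ _ x_step x0S _ s.
have n_gt0 : (0 < n)%N by apply: leq_trans n3.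
have xS : in_simplex (x s).
  by elim: s => [|s IH] //; rewrite x_step; apply: mdf_step_simplex.
have bounds i : vmin (x s) <= x s.+1 i 0 <= vmax (x s).
  by rewrite x_step; apply: mdf_step_bounds.
split=> //; split.
- by have [k ->] := vmin_attained (x s.+1) n_gt0; case/andP: (bounds k).
- by have [k ->] := vmax_attained (x s.+1) n_gt0; case/andP: (bounds k).
Qed.
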